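(* There exists a linear bijection $f:\mathbb{R}^2\to\mathbb{C}$ of real vector spaces such that $f(\mathcal{E})=\mathcal{R}$ and $f(\mathbb{Z}^2)=\mathbb{Z}+\mathbb{Z}\alpha$.
   Context: Let $a,b$ be integers with $-a+1\le b\le -2$, let $\beta$ be the real dominant root of $x^3-ax^2-bx-1$, and assume its conjugates $\alpha,\overline\alpha$ are non-real. Let $T_0=1$, $T_1=a$, $T_2=a^2+b$, $T_{n+3}=aT_{n+2}+bT_{n+1}+T_n$. Admissibility: a digit sequence with digits in $\{0,\dots,a-1\}$ is admissible if every block satisfies $d_jd_{j-1}\cdots d_{j-k}\le_{\mathrm{lex}}(a-1)(a+b-1)(a+b)\cdots(a+b)$ (same length). Each $N\in\mathbb{Z}^+$ has a unique admissible $T$-representation $N=\sum_j d_jT_j$. We write $\delta(N)=N(1/\beta,1/\beta^2)-(\sum_{j\ge1}d_jT_{j-1},\sum_{j\ge2}d_jT_{j-2})$, and $\mathcal{E}=\overline{\{\delta(N):N\in\mathbb{Z}^+\}}\subset\mathbb{R}^2$. The Rauzy fractal is $\mathcal{R}=\{\sum_{i\ge2}d_i\alpha^i:(d_i)_{i\ge2}\text{ admissible}\}\subset\mathbb{C}$. *)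

From Stdlib Require Import Reals ZArith Lra Lia.
Open Scope R_scope.

Definition Cx := (R * R)%type.
Definition Cadd (z w : Cx) : Cx := (fst z + fst w, snd z + snd w).
Definition Cmul (z w : Cx) : Cx :=
  (fst z * fst w - snd z * snd w, fst z * snd w + snd z * fst w).
Definition CofR (x : R) : Cx := (x, 0).
Fixpoint Cpow (z : Cx) (n : nat) : Cx :=
  match n with O => (1, 0) | S m => Cmul z (Cpow z m) end.
Definition Cnorm2 (z : Cx) : R := fst z * fst z + snd z * snd z.

Fixpoint Ttrip (a b : Z) (n : nat) : Z * Z * Z :=
  match n with
  | O => (1%Z, a, (a * a + b)%Z)
  | S m => let '(x, y, z) := Ttrip a b m in (y, z, (a * z + b * y + x)%Z)
  end.
(* T 0 = 1, T 1 = a, T 2 = a^2 + b, T (n+3) = a T(n+2) + b T(n+1) + T n *)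
Definition T (a b : Z) (n : nat) : Z := let '(x, _, _) := Ttrip a b n in x.

Fixpoint sumZ (f : nat -> Z) (n : nat) : Z :=
  match n with O => 0%Z | S m => (sumZ f m + f m)%Z end.

Fixpoint sumC (f : nat -> Cx) (n : nat) : Cx :=
  match n with O => (0, 0) | S m => Cadd (sumC f m) (f m) end.

Definition wword (a b : Z) (i : nat) : Z :=
  match i with O => (a - 1)%Z | 1%nat => (a + b - 1)%Z | _ => (a + b)%Z end.

Definition lex_le (u w : nat -> Z) (n : nat) : Prop :=
  (forall i, (i < n)%nat -> u i = w i) \/
  exists i, (i < n)%nat /\ (forall l, (l < i)%nat -> u l = w l) /\ (u i < w i)%Z.

Definition admissible (a b : Z) (lo : nat) (d : nat -> Z) : Prop :=
  (forall j, (lo <= j)%nat -> (0 <= d j <= a - 1)%Z) /\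
  (forall j k, (lo + k <= j)%nat ->
     lex_le (fun i => d (j - i)%nat) (wword a b) (S k)).

Definition Trep (a b : Z) (N : Z) (L : nat) (d : nat -> Z) : Prop :=
  admissible a b 0 d /\ (forall j, (L <= j)%nat -> d j = 0%Z) /\
  N = sumZ (fun j => (d j * T a b j)%Z) L.

Definition delta (a b : Z) (beta : R) (N : Z) (L : nat) (d : nat -> Z) : R * R :=
  (IZR N / beta - IZR (sumZ (fun i => (d (i + 1)%nat * T a b i)%Z) L),
   IZR N / (beta * beta) - IZR (sumZ (fun i => (d (i + 2)%nat * T a b i)%Z) L)).

Definition Eset (a b : Z) (beta : R) (v : R * R) : Prop :=
  forall eps, eps > 0 ->
    exists N L d, (1 <= N)%Z /\ Trep a b N L d /\
      Rabs (fst v - fst (delta a b beta N L d)) < eps /\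
      Rabs (snd v - snd (delta a b beta N L d)) < eps.

Definition Rauzy (a b : Z) (alpha : Cx) (z : Cx) : Prop :=
  exists d : nat -> Z, admissible a b 2 d /\
    let S := fun n => sumC (fun i => Cmul (CofR (IZR (d (i + 2)%nat)))
                                          (Cpow alpha (i + 2))) n in
    Un_cv (fun n => fst (S n)) (fst z) /\ Un_cv (fun n => snd (S n)) (snd z).

Definition real_linear_bij (f : R * R -> Cx) : Prop :=
  (forall u v, f (fst u + fst v, snd u + snd v) = Cadd (f u) (f v)) /\
  (forall (c : R) u, f (c * fst u, c * snd u) = (c * fst (f u), c * snd (f u))) /\
  (forall u v, f u = f v -> u = v) /\
  (forall z, exists u, f u = z).

From Stdlib Require Import Reals ZArith Lra Lia Psatz Classical ClassicalEpsilon.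
Open Scope R_scope.

(* Write [p = |alpha|^2]; the cubic forces [beta = 1/p], so dominance gives [|alpha| < 1].
   The map [f (u1, u2) = - (1 + b alpha) u1 - alpha u2] sends the vector
   [(T_j / beta - T_{j-1}, T_j / beta^2 - T_{j-2})] to [alpha^(j+2)]: both sides satisfy
   the recurrence of [T] and agree for [j = 0, 1, 2].  Hence [f (delta N)] is the finite
   admissible sum [sum_j d_j alpha^(j+2)] given by the representation of [N].  As [f] is a
   linear homeomorphism, it remains to compare closures.  A point of the Rauzy fractal is
   the limit of its truncations, each completed by a final digit [1] to represent a positive
   integer.  Conversely, a limit of finite admissible sums is an admissible sum: digits can
   be chosen one at a time so that the prefix remains extendable to arbitrarily good
   approximations (finitely many choices per step), and the geometric tail bound
   [|sum_{j >= n} d_j alpha^(j+2)| <= (a - 1) |alpha|^n / (1 - |alpha|)] gives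
   convergence.  Finally [f] maps [Z^2] onto [Z + Z alpha] because its matrix in the
   bases [1, alpha] is integral and unimodular. *)

Definition Cscale (c : R) (z : Cx) : Cx := (c * fst z, c * snd z).

Definition near (u v : R * R) (eps : R) : Prop :=
  Rabs (fst u - fst v) < eps /\ Rabs (snd u - snd v) < eps.

Lemma near_sym u v eps : near u v eps -> near v u eps.
Proof.
  unfold near; intros [H1 H2].
  rewrite Rabs_minus_sym in H1; rewrite Rabs_minus_sym in H2; tauto.
Qed.

Lemma near_trans u v w e1 e2 : near u v e1 -> near v w e2 -> near u w (e1 + e2).
Proof.
  unfold near; intros [U1 U2] [V1 V2]; split.
  - replace (fst u - fst w) with ((fst u - fst v) + (fst v - fst w)) by ring.
    eapply Rle_lt_trans; [apply Rabs_triang | lra].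
  - replace (snd u - snd w) with ((snd u - snd v) + (snd v - snd w)) by ring.
    eapply Rle_lt_trans; [apply Rabs_triang | lra].
Qed.

Lemma near_weaken u v e e' : e <= e' -> near u v e -> near u v e'.
Proof. unfold near; intros He [H1 H2]; split; lra. Qed.

Lemma Cmul_assoc z w u : Cmul z (Cmul w u) = Cmul (Cmul z w) u.
Proof. destruct z, w, u; unfold Cmul; simpl; f_equal; ring. Qed.

Lemma Cpow_add z m n : Cpow z (m + n) = Cmul (Cpow z m) (Cpow z n).
Proof.
  induction m as [|m IH]; simpl.
  - destruct (Cpow z n); unfold Cmul; simpl; f_equal; ring.
  - rewrite IH; apply Cmul_assoc.
Qed.

Lemma Cnorm2_pow z k : Cnorm2 (Cpow z k) = Cnorm2 z ^ k.
Proof.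
  induction k as [|k IH]; simpl; [unfold Cnorm2; simpl; ring|].
  rewrite <- IH; destruct z, (Cpow _ k); unfold Cnorm2, Cmul; simpl; ring.
Qed.

Lemma Cpow_component_bound z r k : 0 <= r -> Cnorm2 z = r * r ->
  Rabs (fst (Cpow z k)) <= r ^ k /\ Rabs (snd (Cpow z k)) <= r ^ k.
Proof.
  intros Hr Hz; pose proof (Cnorm2_pow z k) as N; rewrite Hz in N.
  replace ((r * r) ^ k) with (r ^ k * r ^ k) in N by (rewrite <- Rpow_mult_distr; ring).
  assert (0 <= r ^ k) by (apply pow_le; auto).
  unfold Cnorm2 in N; destruct (Cpow z k) as [u v]; simpl in *.
  split; apply Rabs_le; split; nra.
Qed.

Lemma near_add u w eps : Rabs (fst w) < eps -> Rabs (snd w) < eps -> near u (Cadd u w) eps.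
Proof.
  intros H1 H2; unfold near, Cadd; cbn [fst snd].
  replace (fst u - (fst u + fst w)) with (- fst w) by ring.
  replace (snd u - (snd u + snd w)) with (- snd w) by ring.
  rewrite !Rabs_Ropp; split; assumption.
Qed.

Lemma sumC_ext f g n : (forall j, (j < n)%nat -> f j = g j) -> sumC f n = sumC g n.
Proof.
  induction n as [|n IH]; intros H; simpl; [reflexivity|].
  rewrite IH by (intros; apply H; lia); rewrite H by lia; reflexivity.
Qed.

(* Vieta for [X^3 - a X^2 - b X - 1 = (X^2 - 2 x X + p) (X - 1/p)], [p = |alpha|^2]:
   the non-real root determines [a], [b] and the real root. *)
Lemma nonreal_root_relations (a b : Z) (beta x y : R)
  (hbeta : beta ^ 3 = IZR a * beta ^ 2 + IZR b * beta + 1)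
  (halpha : Cpow (x, y) 3 =
            Cadd (Cadd (Cmul (CofR (IZR a)) (Cpow (x, y) 2))
                       (Cmul (CofR (IZR b)) (x, y))) (CofR 1))
  (hy : y <> 0) :
  0 < x * x + y * y /\ IZR a = 2 * x + / (x * x + y * y) /\
  IZR b = - (x * x + y * y) - 2 * x / (x * x + y * y) /\ beta = / (x * x + y * y).
Proof.
  assert (H1 := f_equal fst halpha); assert (H2 := f_equal snd halpha).
  simpl in H1, H2.
  set (A := IZR a) in *; set (B := IZR b) in *; set (p := x * x + y * y).
  assert (hp : 0 < p) by (pose proof (Rsqr_pos_lt y hy); unfold Rsqr in *; unfold p; nra).
  assert (HB0 : B = 3 * x * x - y * y - 2 * A * x).
  { assert (E : y * (3 * x * x - y * y - 2 * A * x - B) = 0) by nra.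
    apply Rmult_integral in E as [E|E]; [contradiction | lra]. }
  assert (HA : A = 2 * x + / p).
  { assert (E : p * (2 * x - A) + 1 = 0) by (rewrite HB0 in H1; unfold p; nra).
    apply (Rmult_eq_reg_l p); [|lra]; field_simplify; lra. }
  assert (HB : B = - p - 2 * x / p) by (rewrite HB0, HA; unfold p in *; field; lra).
  repeat split; try assumption.
  rewrite HA, HB in hbeta.
  assert (F : (beta - / p) * ((beta - x) * (beta - x) + y * y) = 0).
  { replace ((beta - / p) * ((beta - x) * (beta - x) + y * y))
      with (beta ^ 3 - (2 * x + / p) * beta ^ 2 - (- p - 2 * x / p) * beta - 1)
      by (unfold p in *; field; lra).
    rewrite hbeta; ring. }
  apply Rmult_integral in F as [F|F]; [lra|].
  exfalso; pose proof (Rsqr_pos_lt y hy); pose proof (Rle_0_sqr (beta - x)).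
  unfold Rsqr in *; lra.
Qed.

Definition Crec3 (A B : R) (s : nat -> Cx) : Prop :=
  forall n, s (S (S (S n))) = Cadd (Cadd (Cscale A (s (S (S n)))) (Cscale B (s (S n)))) (s n).

Lemma Crec3_ext A B s t : Crec3 A B s -> Crec3 A B t ->
  s 0%nat = t 0%nat -> s 1%nat = t 1%nat -> s 2%nat = t 2%nat -> forall n, s n = t n.
Proof.
  intros Hs Ht E0 E1 E2 n.
  enough (G : s n = t n /\ s (S n) = t (S n) /\ s (S (S n)) = t (S (S n))) by apply G.
  induction n as [|n (I0 & I1 & I2)]; [auto|].
  repeat split; auto. rewrite Hs, Ht, I0, I1, I2; reflexivity.
Qed.

Lemma Crec3_shift A B s k : Crec3 A B s -> Crec3 A B (fun n => s (n + k)%nat).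
Proof. intros H n; exact (H (n + k)%nat). Qed.

Lemma Cpow_rec3 (A B : R) al :
  Cpow al 3 = Cadd (Cadd (Cmul (CofR A) (Cpow al 2)) (Cmul (CofR B) al)) (CofR 1) ->
  Crec3 A B (Cpow al).
Proof.
  intros halpha n.
  change (S (S (S n))) with (3 + n)%nat; change (S (S n)) with (2 + n)%nat;
    change (S n) with (1 + n)%nat.
  rewrite !Cpow_add, halpha; simpl Cpow.
  destruct al, (Cpow _ n); unfold Cmul, Cadd, CofR, Cscale; simpl; f_equal; ring.
Qed.

Lemma Ttrip_S a b n : Ttrip a b (S n) =
  (let '(_, y, _) := Ttrip a b n in y, let '(_, _, z) := Ttrip a b n in z,
   let '(x, y, z) := Ttrip a b n in (a * z + b * y + x)%Z).
Proof. simpl; destruct (Ttrip a b n) as [[p q] r]; reflexivity. Qed.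

Lemma T_rec a b n :
  T a b (S (S (S n))) = (a * T a b (S (S n)) + b * T a b (S n) + T a b n)%Z.
Proof. unfold T; rewrite !Ttrip_S; destruct (Ttrip a b n) as [[p q] r]; reflexivity. Qed.

Definition Tlag1 a b n : Z := match n with O => 0%Z | S m => T a b m end.
Definition Tlag2 a b n : Z := match n with O | S O => 0%Z | S (S m) => T a b m end.

Lemma Tlag1_rec a b n :
  Tlag1 a b (S (S (S n))) = (a * Tlag1 a b (S (S n)) + b * Tlag1 a b (S n) + Tlag1 a b n)%Z.
Proof. destruct n; simpl Tlag1; [cbn; ring | apply T_rec]. Qed.

Lemma Tlag2_rec a b n :
  Tlag2 a b (S (S (S n))) = (a * Tlag2 a b (S (S n)) + b * Tlag2 a b (S n) + Tlag2 a b n)%Z.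
Proof. destruct n as [|[|n]]; simpl Tlag2; [cbn; ring | cbn; ring | apply T_rec]. Qed.

Lemma T_ge1_nondecreasing a b (hb1 : (- a + 1 <= b)%Z) (hb2 : (b <= -2)%Z) n :
  (1 <= T a b n <= T a b (S n) /\ T a b (S n) <= T a b (S (S n)))%Z.
Proof.
  induction n as [|n IH]; [cbn; nia|].
  rewrite T_rec; nia.
Qed.

Definition real_linear (f : R * R -> R * R) : Prop :=
  (forall u v, f (fst u + fst v, snd u + snd v) = Cadd (f u) (f v)) /\
  (forall (c : R) u, f (c * fst u, c * snd u) = (c * fst (f u), c * snd (f u))).

Lemma real_linear_matrix f (hf : real_linear f) u :
  f u = (fst u * fst (f (1, 0)) + snd u * fst (f (0, 1)),
         fst u * snd (f (1, 0)) + snd u * snd (f (0, 1))).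
Proof.
  destruct hf as [Hadd Hscal]; destruct u as [u1 u2].
  replace (u1, u2) with
    (fst (u1 * fst (1, 0), u1 * snd (1, 0)) + fst (u2 * fst (0, 1), u2 * snd (0, 1)),
     snd (u1 * fst (1, 0), u1 * snd (1, 0)) + snd (u2 * fst (0, 1), u2 * snd (0, 1)))
    at 1 by (simpl; f_equal; ring).
  rewrite Hadd, !Hscal; reflexivity.
Qed.

Lemma real_linear_uniform f (hf : real_linear f) eps : eps > 0 ->
  exists dl, dl > 0 /\ forall u v, near u v dl -> near (f u) (f v) eps.
Proof.
  intros He.
  set (p := f (1, 0)); set (q := f (0, 1)).
  set (K := Rabs (fst p) + Rabs (fst q) + Rabs (snd p) + Rabs (snd q)).
  assert (HK : 0 <= K) by (unfold K; pose proof (Rabs_pos (fst p)); pose proof (Rabs_pos (fst q));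
    pose proof (Rabs_pos (snd p)); pose proof (Rabs_pos (snd q)); lra).
  exists (eps / (K + 1)); split; [apply Rdiv_lt_0_compat; lra|].
  intros u v [H1 H2].
  assert (bound : forall c d, Rabs c + Rabs d <= K ->
    Rabs ((fst u - fst v) * c + (snd u - snd v) * d) < eps).
  { intros c d Hcd.
    eapply Rle_lt_trans; [apply Rabs_triang|]; rewrite !Rabs_mult.
    pose proof (Rabs_pos c); pose proof (Rabs_pos d).
    assert (0 < eps / (K + 1)) by (apply Rdiv_lt_0_compat; lra).
    apply Rle_lt_trans with (eps / (K + 1) * K).
    { apply Rle_trans with (eps / (K + 1) * (Rabs c + Rabs d)); [|nra].
      assert (Rabs (fst u - fst v) * Rabs c <= eps / (K + 1) * Rabs c)
        by (apply Rmult_le_compat_r; lra).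
      assert (Rabs (snd u - snd v) * Rabs d <= eps / (K + 1) * Rabs d)
        by (apply Rmult_le_compat_r; lra).
      lra. }
    apply (Rmult_lt_reg_r (K + 1)); [lra|].
    replace (eps / (K + 1) * K * (K + 1)) with (eps * K) by (field; lra); nra. }
  rewrite (real_linear_matrix f hf u), (real_linear_matrix f hf v); fold p q; split; simpl.
  - replace (fst u * fst p + snd u * fst q - (fst v * fst p + snd v * fst q))
      with ((fst u - fst v) * fst p + (snd u - snd v) * fst q) by ring.
    apply bound; unfold K; pose proof (Rabs_pos (snd p)); pose proof (Rabs_pos (snd q)); lra.
  - replace (fst u * snd p + snd u * snd q - (fst v * snd p + snd v * snd q))
      with ((fst u - fst v) * snd p + (snd u - snd v) * snd q) by ring.
    apply bound; unfold K; pose proof (Rabs_pos (fst p)); pose proof (Rabs_pos (fst q)); lra.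
Qed.

Lemma real_linear_sumC f (hf : real_linear f) (c : nat -> R) (w : nat -> R * R) n :
  f (sumC (fun j => Cscale (c j) (w j)) n) = sumC (fun j => Cscale (c j) (f (w j))) n.
Proof.
  destruct hf as [Hadd Hscal].
  induction n as [|n IH]; simpl.
  - specialize (Hscal 0 (0, 0)); simpl in Hscal; rewrite Rmult_0_l in Hscal.
    rewrite Hscal, !Rmult_0_l; reflexivity.
  - unfold Cadd at 1; rewrite Hadd, IH; unfold Cscale; rewrite Hscal; reflexivity.
Qed.

(* [embed B alpha (u1, u2) = - (1 + B alpha) u1 - alpha u2] *)
Definition embed (B : R) (al : Cx) (u : R * R) : Cx :=
  (- fst u * (1 + B * fst al) - snd u * fst al, - fst u * B * snd al - snd u * snd al).

Definition unembed (B : R) (al : Cx) (w : Cx) : R * R :=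
  ((- fst w * snd al + snd w * fst al) / snd al,
   ((- 1 - B * fst al) * snd w + B * snd al * fst w) / snd al).

Section EmbedInverse.
Variables (B : R) (al : Cx).
Hypothesis hy : snd al <> 0.

Lemma unembedK u : unembed B al (embed B al u) = u.
Proof. destruct u; unfold unembed, embed; simpl; f_equal; field; auto. Qed.

Lemma embedK w : embed B al (unembed B al w) = w.
Proof. destruct w; unfold unembed, embed; simpl; f_equal; field; auto. Qed.

Lemma embed_real_linear : real_linear (embed B al).
Proof. split; intros; unfold embed, Cadd; simpl; f_equal; ring. Qed.

Lemma unembed_real_linear : real_linear (unembed B al).
Proof. split; intros; unfold unembed, Cadd; simpl; f_equal; field; auto. Qed.

Lemma embed_bij : real_linear_bij (embed B al).
Proof.
  destruct embed_real_linear as [Hadd Hscal].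
  split; [exact Hadd | split; [exact Hscal | split]].
  - intros u v E; rewrite <- (unembedK u), <- (unembedK v), E; reflexivity.
  - intros z; exists (unembed B al z); apply embedK.
Qed.

End EmbedInverse.

Lemma embed_lattice (b : Z) (al : Cx) z :
  (exists m n : Z, z = embed (IZR b) al (IZR m, IZR n)) <->
  (exists p q : Z, z = Cadd (CofR (IZR p)) (Cmul (CofR (IZR q)) al)).
Proof.
  destruct al as [x y]; split.
  - intros (m & n & ->); exists (- m)%Z, (- b * m - n)%Z.
    unfold embed, Cadd, Cmul, CofR; simpl.
    rewrite !minus_IZR, !opp_IZR, !mult_IZR, !opp_IZR; f_equal; ring.
  - intros (p & q & ->); exists (- p)%Z, (- q + b * p)%Z.
    unfold embed, Cadd, Cmul, CofR; simpl.
    rewrite !plus_IZR, !opp_IZR, !mult_IZR; f_equal; ring.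
Qed.

Lemma IZR_rec3 (a b : Z) (s : nat -> Z) :
  (forall n, s (S (S (S n))) = (a * s (S (S n)) + b * s (S n) + s n)%Z) ->
  forall n, IZR (s (S (S (S n)))) =
            IZR a * IZR (s (S (S n))) + IZR b * IZR (s (S n)) + IZR (s n).
Proof. intros H n; rewrite H, !plus_IZR, !mult_IZR; ring. Qed.

(* [delta(N) = sum_j d_j delta_basis j] for the representation [N = sum_j d_j T_j]. *)
Definition delta_basis (a b : Z) (beta : R) (j : nat) : R * R :=
  (IZR (T a b j) / beta - IZR (Tlag1 a b j), IZR (T a b j) / (beta * beta) - IZR (Tlag2 a b j)).

Definition digit_sum (al : Cx) (d : nat -> Z) (n : nat) : Cx :=
  sumC (fun i => Cscale (IZR (d i)) (Cpow al (i + 2))) n.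

Lemma delta_basis_rec3 a b beta : beta <> 0 -> Crec3 (IZR a) (IZR b) (delta_basis a b beta).
Proof.
  intros hb n; unfold delta_basis, Cadd, Cscale; cbn [fst snd].
  rewrite (IZR_rec3 a b _ (T_rec a b)), (IZR_rec3 a b _ (Tlag1_rec a b)),
    (IZR_rec3 a b _ (Tlag2_rec a b)).
  f_equal; field; auto.
Qed.

Lemma embed_Crec3 A B B' al s : Crec3 A B s -> Crec3 A B (fun n => embed B' al (s n)).
Proof.
  intros H n; rewrite H.
  destruct (s (S (S n))), (s (S n)), (s n); unfold embed, Cadd, Cscale; simpl; f_equal; ring.
Qed.

Lemma delta_basis_sum a b beta (d : nat -> Z) L :
  beta <> 0 ->
  sumC (fun j => Cscale (IZR (d j)) (delta_basis a b beta j)) L =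
  (IZR (sumZ (fun j => (d j * T a b j)%Z) L) / beta
     - IZR (sumZ (fun j => (d j * Tlag1 a b j)%Z) L),
   IZR (sumZ (fun j => (d j * T a b j)%Z) L) / (beta * beta)
     - IZR (sumZ (fun j => (d j * Tlag2 a b j)%Z) L)).
Proof.
  intros hb; induction L as [|L IH]; simpl.
  - f_equal; field; auto.
  - rewrite IH; unfold Cadd, Cscale, delta_basis; simpl.
    rewrite !plus_IZR, !mult_IZR; f_equal; field; auto.
Qed.

Lemma sumZ_shift1 a b (d : nat -> Z) L :
  sumZ (fun i => (d (i + 1)%nat * T a b i)%Z) L = sumZ (fun j => (d j * Tlag1 a b j)%Z) (S L).
Proof.
  induction L as [|L IH]; simpl; [ring|].
  simpl in IH; rewrite IH, Nat.add_1_r; reflexivity.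
Qed.

Lemma sumZ_shift2 a b (d : nat -> Z) L :
  sumZ (fun i => (d (i + 2)%nat * T a b i)%Z) L =
  sumZ (fun j => (d j * Tlag2 a b j)%Z) (S (S L)).
Proof.
  induction L as [|L IH]; simpl; [ring|].
  simpl in IH; rewrite IH; replace (L + 2)%nat with (S (S L)) by lia; reflexivity.
Qed.

Lemma delta_as_sum a b beta (d : nat -> Z) L :
  beta <> 0 -> (forall j, (L <= j)%nat -> d j = 0%Z) ->
  delta a b beta (sumZ (fun j => (d j * T a b j)%Z) L) L d =
  sumC (fun j => Cscale (IZR (d j)) (delta_basis a b beta j)) L.
Proof.
  intros hb hz; rewrite delta_basis_sum by exact hb.
  unfold delta; rewrite sumZ_shift1, sumZ_shift2; simpl sumZ.
  rewrite (hz L), (hz (S L)) by lia; rewrite !Z.mul_0_l, !Z.add_0_r; reflexivity.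
Qed.

Section DeltaEmbedding.

Variables (a b : Z) (beta x y : R).
Hypothesis HA : IZR a = 2 * x + / (x * x + y * y).
Hypothesis HB : IZR b = - (x * x + y * y) - 2 * x / (x * x + y * y).
Hypothesis Hbeta : beta = / (x * x + y * y).
Hypothesis hp : 0 < x * x + y * y.
Hypothesis halpha : Cpow (x, y) 3 =
  Cadd (Cadd (Cmul (CofR (IZR a)) (Cpow (x, y) 2)) (Cmul (CofR (IZR b)) (x, y))) (CofR 1).

Lemma beta_neq0 : beta <> 0.
Proof. rewrite Hbeta; apply Rinv_neq_0_compat; lra. Qed.

Lemma embed_delta_basis j :
  embed (IZR b) (x, y) (delta_basis a b beta j) = Cpow (x, y) (j + 2).
Proof.
  pose proof beta_neq0 as hb.
  apply (Crec3_ext (IZR a) (IZR b) (fun n => embed (IZR b) (x, y) (delta_basis a b beta n))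
                   (fun n => Cpow (x, y) (n + 2))).
  { apply embed_Crec3, delta_basis_rec3, hb. }
  { apply Crec3_shift, Cpow_rec3, halpha. }
  all: unfold embed, delta_basis; cbn; unfold Cmul; cbn [fst snd];
    rewrite ?plus_IZR, ?mult_IZR, ?HB, ?HA, Hbeta; f_equal; field; lra.
Qed.

Lemma embed_delta (d : nat -> Z) L :
  (forall j, (L <= j)%nat -> d j = 0%Z) ->
  embed (IZR b) (x, y) (delta a b beta (sumZ (fun j => (d j * T a b j)%Z) L) L d) =
  digit_sum (x, y) d L.
Proof.
  intros hz; rewrite delta_as_sum by (exact beta_neq0 || exact hz).
  rewrite real_linear_sumC by apply embed_real_linear.
  apply sumC_ext; intros j _; rewrite embed_delta_basis; reflexivity.
Qed.

End DeltaEmbedding.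

Lemma lex_le_ext u u' w n :
  (forall i, (i < n)%nat -> u i = u' i) -> lex_le u w n -> lex_le u' w n.
Proof.
  intros E [H | (i & Hi & Hl & Hlt)].
  - left; intros i Hi; rewrite <- E by exact Hi; auto.
  - right; exists i; repeat split; auto.
    + intros l Hl'; rewrite <- E by lia; auto.
    + rewrite <- E by exact Hi; exact Hlt.
Qed.

Lemma admissible_ext a b lo d d' :
  (forall j, d j = d' j) -> admissible a b lo d -> admissible a b lo d'.
Proof.
  intros E [H1 H2]; split.
  - intros j Hj; rewrite <- E; auto.
  - intros j k Hjk; apply (lex_le_ext (fun i => d (j - i)%nat)); [intros; apply E | auto].
Qed.

Lemma admissible_shift2 a b d :
  admissible a b 2 d <-> admissible a b 0 (fun j => d (j + 2)%nat).
Proof.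
  split; intros [H1 H2]; split.
  - intros j _; apply H1; lia.
  - intros j k Hjk; apply (lex_le_ext (fun i => d (j + 2 - i)%nat)).
    + intros i Hi; f_equal; lia.
    + apply H2; lia.
  - intros j Hj; replace j with (j - 2 + 2)%nat by lia; apply H1; lia.
  - intros j k Hjk; apply (lex_le_ext (fun i => d (j - 2 - i + 2)%nat)).
    + intros i Hi; f_equal; lia.
    + apply (H2 (j - 2)%nat k); lia.
Qed.

(* A block starting at a digit [<= a - 2] is lexicographically below [(a-1)...]. *)
Lemma admissible_small_tail a b (d d' : nat -> Z) n :
  admissible a b 0 d -> (forall j, (n <= j)%nat -> (0 <= d' j <= a - 2)%Z) ->
  (forall j, (j < n)%nat -> d' j = d j) -> admissible a b 0 d'.
Proof.
  intros [H1 H2] Htail Hpre; split.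
  - intros j _; destruct (Nat.lt_ge_cases j n) as [Hj|Hj].
    + rewrite Hpre by exact Hj; apply H1; lia.
    + specialize (Htail j Hj); lia.
  - intros j k Hjk; destruct (Nat.lt_ge_cases j n) as [Hj|Hj].
    + apply (lex_le_ext (fun i => d (j - i)%nat)); [intros i Hi; rewrite Hpre by lia; reflexivity|].
      apply H2; lia.
    + right; exists 0%nat; repeat split; [lia | intros; lia|].
      rewrite Nat.sub_0_r; specialize (Htail j Hj); simpl; lia.
Qed.

Lemma digit_sum_ext al d d' n :
  (forall j, (j < n)%nat -> d j = d' j) -> digit_sum al d n = digit_sum al d' n.
Proof. intros H; apply sumC_ext; intros j Hj; rewrite H by exact Hj; reflexivity. Qed.

Lemma digit_sum_S al d n :
  digit_sum al d (S n) = Cadd (digit_sum al d n) (Cscale (IZR (d n)) (Cpow al (n + 2))).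
Proof. reflexivity. Qed.

Lemma digit_sum_stationary al d L n :
  (forall j, (L <= j)%nat -> d j = 0%Z) -> (L <= n)%nat -> digit_sum al d n = digit_sum al d L.
Proof.
  intros H HLn; induction HLn as [|n HLn IH]; [reflexivity|].
  rewrite digit_sum_S, IH, H by exact HLn.
  destruct (digit_sum al d L); unfold Cadd, Cscale; simpl; f_equal; ring.
Qed.

Lemma geometric_tail (s : nat -> R) M r :
  0 <= r < 1 -> (forall k, Rabs (s (S k) - s k) <= M * r ^ k) ->
  forall n m, Rabs (s (n + m)%nat - s n) <= M * r ^ n / (1 - r).
Proof.
  intros Hr Hs n m.
  assert (HM : 0 <= M).
  { specialize (Hs 0%nat); simpl in Hs; pose proof (Rabs_pos (s 1%nat - s 0%nat)); lra. }
  assert (strong : Rabs (s (n + m)%nat - s n) <= M * (r ^ n - r ^ (n + m)) / (1 - r)).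
  { induction m as [|m IH].
    - rewrite Nat.add_0_r; unfold Rminus; rewrite !Rplus_opp_r, Rabs_R0.
      replace (M * 0 / (1 + - r)) with 0 by (field; lra); lra.
    - rewrite Nat.add_succ_r.
      replace (s (S (n + m)) - s n) with ((s (S (n + m)) - s (n + m)%nat) + (s (n + m)%nat - s n))
        by ring.
      eapply Rle_trans; [apply Rabs_triang|].
      replace (M * (r ^ n - r ^ S (n + m)) / (1 - r))
        with (M * r ^ (n + m) + M * (r ^ n - r ^ (n + m)) / (1 - r)) by (simpl; field; lra).
      specialize (Hs (n + m)%nat); lra. }
  eapply Rle_trans; [exact strong|].
  assert (0 <= r ^ (n + m)) by (apply pow_le; lra).
  unfold Rdiv; apply Rmult_le_compat_r; [left; apply Rinv_0_lt_compat; lra | nra].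
Qed.

Lemma digit_sum_tail al r M d (hr : 0 <= r < 1) (hal : Cnorm2 al = r * r)
  (hd : forall j, Rabs (IZR (d j)) <= M) n m :
  Rabs (fst (digit_sum al d (n + m)) - fst (digit_sum al d n)) <= M * r ^ n / (1 - r) /\
  Rabs (snd (digit_sum al d (n + m)) - snd (digit_sum al d n)) <= M * r ^ n / (1 - r).
Proof.
  assert (Hstep : forall k (pr : Cx -> R) X, Rabs (pr (Cpow al (k + 2))) <= r ^ (k + 2) ->
    Rabs (X + IZR (d k) * pr (Cpow al (k + 2)) - X) <= M * r ^ k).
  { intros k pr X Hk.
    replace (X + IZR (d k) * pr (Cpow al (k + 2)) - X) with (IZR (d k) * pr (Cpow al (k + 2)))
      by ring.
    rewrite Rabs_mult.
    assert (r ^ (k + 2) <= r ^ k).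
    { rewrite pow_add; assert (0 <= r ^ k) by (apply pow_le; lra).
      assert (r ^ 2 <= 1) by (simpl; nra); nra. }
    pose proof (Rabs_pos (IZR (d k))); pose proof (Rabs_pos (pr (Cpow al (k + 2)))).
    pose proof (hd k).
    apply Rle_trans with (M * r ^ (k + 2)); [apply Rmult_le_compat; auto | nra]. }
  split; [apply (geometric_tail (fun k => fst (digit_sum al d k)) M r hr)
        | apply (geometric_tail (fun k => snd (digit_sum al d k)) M r hr)];
    intro k; rewrite digit_sum_S; unfold Cadd, Cscale; cbn [fst snd];
    apply Hstep; apply (Cpow_component_bound al r (k + 2) (proj1 hr) hal).
Qed.

(* If every [t < m] failed at some [eps_t], all would fail at [min_t eps_t]. *)
Lemma finite_choice_small_eps (m : nat) (P : nat -> R -> Prop) :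
  (forall t e e', 0 < e <= e' -> P t e -> P t e') ->
  (forall eps, eps > 0 -> exists t, (t < m)%nat /\ P t eps) ->
  exists t, (t < m)%nat /\ forall eps, eps > 0 -> P t eps.
Proof.
  intros Hmono; induction m as [|m IH]; intros Hex.
  - destruct (Hex 1 Rlt_0_1) as (t & Ht & _); lia.
  - destruct (classic (forall eps, eps > 0 -> P m eps)) as [Hm|Hm].
    { exists m; split; [lia | exact Hm]. }
    apply not_all_ex_not in Hm as [e0 Hm]; apply imply_to_and in Hm as [He0 Hm].
    destruct IH as (t & Ht & HP).
    + intros eps Heps.
      destruct (Hex (Rmin eps e0)) as (t & Ht & HP); [apply Rmin_glb_lt; lra|].
      destruct (Nat.eq_dec t m) as [->|Htm].
      * exfalso; apply Hm, (Hmono m (Rmin eps e0)); [|exact HP].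
        split; [apply Rmin_glb_lt; lra | apply Rmin_r].
      * exists t; split; [lia|]; apply (Hmono t (Rmin eps e0)); [|exact HP].
        split; [apply Rmin_glb_lt; lra | apply Rmin_l].
    + exists t; split; [lia | exact HP].
Qed.

Definition upd (c : nat -> Z) (n : nat) (t : Z) : nat -> Z :=
  fun j => if Nat.eqb j n then t else c j.

Fixpoint greedy (Q : (nat -> Z) -> nat -> Prop) (c0 : nat -> Z) (n : nat) : nat -> Z :=
  match n with
  | O => c0
  | S m => let c := greedy Q c0 m in
           upd c m (epsilon (inhabits 0%Z) (fun t => Q (upd c m t) (S m)))
  end.

Lemma greedy_stable Q c0 j n : (j < n)%nat -> greedy Q c0 n j = greedy Q c0 (S j) j.
Proof.
  induction n as [|n IH]; intros H; [lia|].
  destruct (Nat.eq_dec j n) as [->|Hne]; [reflexivity|].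
  simpl greedy at 1; unfold upd at 1; rewrite (proj2 (Nat.eqb_neq j n) Hne); apply IH; lia.
Qed.

(* König's lemma, with the digits chosen greedily by [epsilon]. *)
Lemma prefix_limit (Q : (nat -> Z) -> nat -> Prop) (c0 : nat -> Z) :
  (forall c c' n, (forall j, (j < n)%nat -> c j = c' j) -> Q c n -> Q c' n) ->
  Q c0 0%nat -> (forall c n, Q c n -> exists t, Q (upd c n t) (S n)) ->
  exists e, forall n, Q e n.
Proof.
  intros Hext H0 Hstep.
  assert (Hgreedy : forall n, Q (greedy Q c0 n) n).
  { induction n as [|n IH]; [exact H0|].
    exact (epsilon_spec (inhabits 0%Z) (fun t => Q (upd (greedy Q c0 n) n t) (S n))
                        (Hstep _ n IH)). }
  exists (fun j => greedy Q c0 (S j) j); intros n.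
  apply (Hext (greedy Q c0 n)); [intros j Hj; apply greedy_stable, Hj | apply Hgreedy].
Qed.

Definition approximable (a b : Z) (al z : Cx) (c : nat -> Z) (n : nat) : Prop :=
  forall eps, eps > 0 -> exists d L,
    admissible a b 0 d /\ (forall j, (L <= j)%nat -> d j = 0%Z) /\
    (forall j, (j < n)%nat -> d j = c j) /\ near z (digit_sum al d L) eps.

Lemma approximable_ext a b al z c c' n :
  (forall j, (j < n)%nat -> c j = c' j) -> approximable a b al z c n -> approximable a b al z c' n.
Proof.
  intros E H eps He; destruct (H eps He) as (d & L & A1 & A2 & A3 & A4).
  exists d, L; do 2 (split; [assumption|]); split; [|exact A4].
  intros k Hk; rewrite A3, E; auto.
Qed.

Lemma approximable_extend a b al z c n :
  approximable a b al z c n -> exists t, approximable a b al z (upd c n t) (S n).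
Proof.
  intros H.
  set (P t eps := exists d L, admissible a b 0 d /\ (forall j, (L <= j)%nat -> d j = 0%Z) /\
    (forall j, (j < S n)%nat -> d j = upd c n (Z.of_nat t) j) /\ near z (digit_sum al d L) eps).
  destruct (finite_choice_small_eps (Z.to_nat a) P) as (t & _ & Ht).
  - intros t e e' He (d & L & A1 & A2 & A3 & A4).
    exists d, L; do 3 (split; [assumption|]); apply (near_weaken _ _ e); [lra | exact A4].
  - intros eps Heps; destruct (H eps Heps) as (d & L & A1 & A2 & A3 & A4).
    assert (Hdn : (0 <= d n <= a - 1)%Z) by (apply (proj1 A1); lia).
    exists (Z.to_nat (d n)); split; [lia|].
    exists d, L; do 2 (split; [assumption|]); split; [|exact A4].
    intros j Hj; unfold upd; destruct (Nat.eqb_spec j n) as [->|Hne].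
    + rewrite Z2Nat.id; lia.
    + apply A3; lia.
  - exists (Z.of_nat t); exact Ht.
Qed.

Lemma approximable_admissible a b al z e :
  (forall n, approximable a b al z e n) -> admissible a b 0 e.
Proof.
  intros H; split.
  - intros j _; destruct (H (S j) 1 Rlt_0_1) as (d & L & [D1 _] & _ & A3 & _).
    rewrite <- A3 by lia; apply D1; lia.
  - intros j k Hjk; destruct (H (S j) 1 Rlt_0_1) as (d & L & [_ D2] & _ & A3 & _).
    apply (lex_le_ext (fun i => d (j - i)%nat)); [intros i Hi; apply A3; lia | apply D2; lia].
Qed.

Lemma approximable_limit a b al z e r :
  (1 <= a)%Z -> 0 <= r < 1 -> Cnorm2 al = r * r -> (forall n, approximable a b al z e n) ->
  forall eps, eps > 0 -> exists N, forall n, (n >= N)%nat -> near (digit_sum al e n) z eps.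
Proof.
  intros ha hr hal H eps He.
  set (M := IZR a - 1).
  assert (HM : 0 <= M) by (unfold M; rewrite <- minus_IZR; apply IZR_le; lia).
  destruct (pow_lt_1_zero r ltac:(rewrite Rabs_right; lra) (eps * (1 - r) / (2 * (M + 1))))
    as [N HN]; [apply Rdiv_lt_0_compat; nra|].
  exists N; intros n Hn.
  destruct (H n (eps / 2) ltac:(lra)) as (d & L & Hd & Hz & Hpre & Hnear).
  assert (HdM : forall j, Rabs (IZR (d j)) <= M).
  { intros j; destruct (proj1 Hd j ltac:(lia)) as [D0 D1].
    rewrite Rabs_right by (apply Rle_ge, IZR_le; exact D0).
    unfold M; rewrite <- minus_IZR; apply IZR_le; exact D1. }
  assert (HL : digit_sum al d L = digit_sum al d (n + (L - n))).
  { destruct (Nat.le_gt_cases n L); [f_equal; lia|].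
    replace (n + (L - n))%nat with n by lia.
    symmetry; apply digit_sum_stationary; [exact Hz | lia]. }
  assert (Htail : M * r ^ n / (1 - r) < eps / 2).
  { specialize (HN n Hn); rewrite Rabs_right in HN by (apply Rle_ge, pow_le; lra).
    assert (0 <= r ^ n) by (apply pow_le; lra).
    assert (Hmul : (M + 1) * (eps * (1 - r) / (2 * (M + 1))) = eps * (1 - r) / 2)
      by (field; lra).
    assert (M * r ^ n < eps * (1 - r) / 2) by nra.
    apply (Rmult_lt_reg_r (1 - r)); [lra|].
    replace (M * r ^ n / (1 - r) * (1 - r)) with (M * r ^ n) by (field; lra); lra. }
  rewrite (digit_sum_ext al e d n) by (intros j Hj; symmetry; apply Hpre, Hj).
  apply (near_weaken _ _ (eps / 2 + eps / 2)); [lra|].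
  apply (near_trans _ (digit_sum al d L)); [|apply near_sym, Hnear].
  rewrite HL; destruct (digit_sum_tail al r M d hr hal HdM n (L - n)) as [T1 T2].
  split; rewrite Rabs_minus_sym; lra.
Qed.

Lemma Un_cv_near (s : nat -> Cx) z :
  (Un_cv (fun n => fst (s n)) (fst z) /\ Un_cv (fun n => snd (s n)) (snd z)) <->
  (forall eps, eps > 0 -> exists N, forall n, (n >= N)%nat -> near (s n) z eps).
Proof.
  split.
  - intros [C1 C2] eps He.
    destruct (C1 eps He) as [N1 H1]; destruct (C2 eps He) as [N2 H2].
    exists (N1 + N2)%nat; intros n Hn; split; [apply H1 | apply H2]; lia.
  - intros H; split; intros eps He; destruct (H eps He) as [N HN]; exists N;
      intros n Hn; apply HN, Hn.
Qed.

Lemma sumZ_nonneg g n : (forall j, (0 <= g j)%Z) -> (0 <= sumZ g n)%Z.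
Proof. intros H; induction n as [|n IH]; simpl; [lia|]; specialize (H n); lia. Qed.

Lemma Rauzy_partial_sum al (d : nat -> Z) n :
  sumC (fun i => Cmul (CofR (IZR (d (i + 2)%nat))) (Cpow al (i + 2))) n =
  digit_sum al (fun i => d (i + 2)%nat) n.
Proof.
  apply sumC_ext; intros j _; destruct (Cpow al (j + 2)).
  unfold Cmul, CofR, Cscale; simpl; f_equal; ring.
Qed.

Lemma Rauzy_digit_sum a b al z :
  Rauzy a b al z <-> exists e, admissible a b 0 e /\
    forall eps, eps > 0 -> exists N, forall n, (n >= N)%nat -> near (digit_sum al e n) z eps.
Proof.
  split.
  - intros (D & HD & C1 & C2); exists (fun j => D (j + 2)%nat).
    split; [apply admissible_shift2, HD|].
    apply Un_cv_near; split; [eapply Un_cv_ext, C1 | eapply Un_cv_ext, C2];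
      intros n; cbv beta; rewrite Rauzy_partial_sum; reflexivity.
  - intros (e & He & Hc).
    set (D := fun j => if (j <? 2)%nat then 0%Z else e (j - 2)%nat).
    assert (ED : forall j, e j = D (j + 2)%nat).
    { intros j; unfold D; destruct (Nat.ltb_spec (j + 2) 2); [lia|]; f_equal; lia. }
    exists D; split; [apply admissible_shift2, (admissible_ext _ _ _ e); auto|].
    destruct (proj2 (Un_cv_near _ z) Hc) as [C1 C2]; cbv zeta.
    split; [eapply Un_cv_ext, C1 | eapply Un_cv_ext, C2];
      intros n; rewrite Rauzy_partial_sum, (digit_sum_ext _ e (fun j => D (j + 2)%nat));
      auto.
Qed.

Section RauzyVsE.

Variables (a b : Z) (beta x y r : R).
Hypothesis ha : (3 <= a)%Z.
Hypothesis hT : forall n, (1 <= T a b n)%Z.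
Hypothesis hy : y <> 0.
Hypothesis HA : IZR a = 2 * x + / (x * x + y * y).
Hypothesis HB : IZR b = - (x * x + y * y) - 2 * x / (x * x + y * y).
Hypothesis Hbeta : beta = / (x * x + y * y).
Hypothesis hp : 0 < x * x + y * y.
Hypothesis halpha : Cpow (x, y) 3 =
  Cadd (Cadd (Cmul (CofR (IZR a)) (Cpow (x, y) 2)) (Cmul (CofR (IZR b)) (x, y))) (CofR 1).
Hypothesis hr : 0 <= r < 1.
Hypothesis hal : Cnorm2 (x, y) = r * r.

(* The digit [1] appended after the truncation is admissible because [1 <= a - 2]. *)
Lemma Rauzy_in_image_E z :
  Rauzy a b (x, y) z -> Eset a b beta (unembed (IZR b) (x, y) z).
Proof.
  intros (e & He & Hconv)%Rauzy_digit_sum eps Heps.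
  destruct (real_linear_uniform _ (unembed_real_linear (IZR b) (x, y) hy) eps Heps)
    as (dl & Hdl & Hg).
  destruct (Hconv (dl / 2) ltac:(lra)) as [N1 HN1].
  destruct (pow_lt_1_zero r ltac:(rewrite Rabs_right; lra) (dl / 2) ltac:(lra)) as [N2 HN2].
  set (n := (N1 + N2)%nat).
  set (e' := fun j => if (j <? n)%nat then e j else if (j =? n)%nat then 1%Z else 0%Z).
  assert (He'n : e' n = 1%Z) by (unfold e'; rewrite Nat.ltb_irrefl, Nat.eqb_refl; reflexivity).
  assert (Hpre : forall j, (j < n)%nat -> e' j = e j)
    by (intros j Hj; unfold e'; destruct (Nat.ltb_spec j n); [reflexivity | lia]).
  assert (Hfin : forall j, (S n <= j)%nat -> e' j = 0%Z).
  { intros j Hj; unfold e'; destruct (Nat.ltb_spec j n); [lia|].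
    destruct (Nat.eqb_spec j n); [lia | reflexivity]. }
  assert (He' : admissible a b 0 e').
  { apply (admissible_small_tail a b e e' n He); [|exact Hpre].
    intros j Hj; unfold e'; destruct (Nat.ltb_spec j n); [lia|]; destruct (j =? n)%nat; lia. }
  exists (sumZ (fun j => (e' j * T a b j)%Z) (S n)), (S n), e'.
  split; [|split; [split; [exact He' | split; [exact Hfin | reflexivity]]|]].
  - assert (0 <= sumZ (fun j => (e' j * T a b j)%Z) n)%Z.
    { apply sumZ_nonneg; intros j.
      destruct (proj1 He' j ltac:(lia)); specialize (hT j); nia. }
    simpl; rewrite He'n; specialize (hT n); lia.
  - rewrite <- (unembedK (IZR b) (x, y) hy (delta _ _ _ _ _ _)).
    apply Hg; rewrite (embed_delta a b beta x y HA HB Hbeta hp halpha e' (S n) Hfin).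
    rewrite digit_sum_S, He'n, (digit_sum_ext _ e' e n Hpre).
    apply (near_weaken _ _ (dl / 2 + dl / 2)); [lra|].
    apply (near_trans _ (digit_sum (x, y) e n)); [apply near_sym, HN1; unfold n; lia|].
    destruct (Cpow_component_bound (x, y) r (n + 2) (proj1 hr) hal) as [P1 P2].
    specialize (HN2 (n + 2)%nat ltac:(unfold n; lia)).
    rewrite Rabs_right in HN2 by (apply Rle_ge, pow_le; lra).
    apply near_add; unfold Cscale; cbn [fst snd IZR IPR]; rewrite Rmult_1_l; lra.
Qed.

Lemma image_E_in_Rauzy v : Eset a b beta v -> Rauzy a b (x, y) (embed (IZR b) (x, y) v).
Proof.
  intros Hv.
  set (z := embed (IZR b) (x, y) v).
  assert (H0 : approximable a b (x, y) z (fun _ => 0%Z) 0).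
  { intros eps Heps.
    destruct (real_linear_uniform _ (embed_real_linear (IZR b) (x, y)) eps Heps)
      as (dl & Hdl & Hf).
    destruct (Hv dl Hdl) as (N & L & d & _ & (Hd & Hz & ->) & Hnear).
    exists d, L; split; [exact Hd|]; split; [exact Hz|]; split; [intros; lia|].
    rewrite <- (embed_delta a b beta x y HA HB Hbeta hp halpha d L Hz).
    apply Hf, Hnear. }
  destruct (prefix_limit (approximable a b (x, y) z) (fun _ => 0%Z)
              (approximable_ext a b (x, y) z) H0 (approximable_extend a b (x, y) z))
    as [e He].
  apply Rauzy_digit_sum; exists e; split; [apply (approximable_admissible a b (x, y) z), He|].
  apply (approximable_limit a b (x, y) z e r); auto; lia.
Qed.

End RauzyVsE.

Lemma lt_1_of_lt_inv_square p : 0 < p -> p < / p * / p -> p < 1.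
Proof.
  intros Hp H; destruct (Rlt_or_le p 1) as [|H1]; [assumption|].
  assert (/ p <= 1) by (rewrite <- Rinv_1; apply Rinv_le_contravar; lra).
  assert (0 < / p) by (apply Rinv_0_lt_compat, Hp); nra.
Qed.

Theorem proposition3p3 (a b : Z) (beta : R) (alpha : Cx)
  (hb1 : (- a + 1 <= b)%Z) (hb2 : (b <= -2)%Z)
  (hbeta : beta ^ 3 = IZR a * beta ^ 2 + IZR b * beta + 1)
  (halpha : Cpow alpha 3 =
            Cadd (Cadd (Cmul (CofR (IZR a)) (Cpow alpha 2))
                       (Cmul (CofR (IZR b)) alpha)) (CofR 1))
  (halpha_nonreal : snd alpha <> 0)
  (hdom : Cnorm2 alpha < beta * beta) :
  exists f : R * R -> Cx,
    real_linear_bij f /\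
    (forall z, Rauzy a b alpha z <-> exists v, Eset a b beta v /\ f v = z) /\
    (forall z, (exists m n : Z, z = f (IZR m, IZR n)) <->
               (exists p q : Z, z = Cadd (CofR (IZR p)) (Cmul (CofR (IZR q)) alpha))).
Proof.
  destruct alpha as [x y]; simpl in halpha_nonreal.
  destruct (nonreal_root_relations a b beta x y hbeta halpha halpha_nonreal)
    as (hp & HA & HB & Hbeta).
  assert (hT : forall n, (1 <= T a b n)%Z) by (intros n; apply (T_ge1_nondecreasing a b hb1 hb2 n)).
  assert (hp1 : x * x + y * y < 1).
  { apply lt_1_of_lt_inv_square; [exact hp|]; rewrite <- Hbeta; exact hdom. }
  set (r := sqrt (x * x + y * y)).
  assert (hrr : r * r = x * x + y * y) by (apply sqrt_sqrt; lra).
  assert (hr : 0 <= r < 1) by (split; [apply sqrt_pos | nra]).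
  exists (embed (IZR b) (x, y)).
  split; [apply embed_bij, halpha_nonreal|]; split; [|apply embed_lattice].
  intros z; split.
  - intros Hz; exists (unembed (IZR b) (x, y) z); split; [|apply embedK, halpha_nonreal].
    apply (Rauzy_in_image_E a b beta x y r); auto; lia.
  - intros (v & Hv & <-).
    apply (image_E_in_Rauzy a b beta x y r); auto; lia.
Qed.
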